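(* Let $R=k[x_1,\dots,x_n]$ be a standard graded polynomial ring over a field $k$, $I\subseteq R$ a homogeneous ideal and $(F_\bullet,d_\bullet)$ a homogeneous free resolution of $R/I$ with $F_0=R$. Write $F_1=F_1'\oplus\bigoplus_{i=1}^tRe_0^i$ where each $e_0^i$ generates a free direct summand, and write $d_2=d_2'+d_0^1+\cdots+d_0^t$ with $d_2':F_2\to F_1'$ and $d_0^i:F_2\to Re_0^i$ the components. For each $i$ let $\mathfrak a_i$ be a homogeneous ideal with $d_0^i(F_2)\subseteq\mathfrak a_ie_0^i$ and $(G^i_\bullet,m^i_\bullet)$ a homogeneous free resolution of $R/\mathfrak a_i$ with $G^i_0=R$. Let $K'=d_1(F_1')$, $K_0^i=(d_1(e_0^i))$ and $J=K'+\mathfrak a_1K_0^1+\cdots+\mathfrak a_tK_0^t$. For each $i$ let $(d_0^i)':F_2\to R$ be $d_0^i$ followed by $e_0^i\mapsto1$, and let $q^i_1:F_2\to G^i_1$, $q^i_k:F_{k+1}\to G^i_k$ ($k\ge2$) be homomorphisms with $m^i_1q^i_1=(d^i_0)'$ and $m^i_kq^i_k=q^i_{k-1}d_{k+1}$. Let $T_\bullet$ be the complex $\cdots\to F_3\xrightarrow{d_3}F_2\xrightarrow{d_2'}F_1'$ (with $F_1'$ in degree $0$, $F_i$ in degree $i-1$), and $B_\bullet$ the complex $\cdots\to\bigoplus_iG^i_2\xrightarrow{\oplus m_2^i}\bigoplus_iG^i_1\xrightarrow{\beta}R$ with $\beta(g_1,\dots,g_t)=-\sum_{i=1}^tm^i_1(g_i)\,d_1(e^i_0)$.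 Then $d_1|_{F_1'}:F_1'\to R$ together with the maps $(q^1_{k-1},\dots,q^t_{k-1})^T:F_k\to\bigoplus_iG^i_{k-1}$ ($k\ge2$) form a morphism of complexes $T_\bullet\to B_\bullet$ whose mapping cone is a free resolution of $R/J$.
   Context: The mapping cone has $R$ in degree $0$, $F_1'\oplus\bigoplus_iG^i_1$ in degree $1$, and $F_k\oplus\bigoplus_iG^i_k$ in degree $k\ge2$. It is called the iterated trimming complex. *)

From HB Require Import structures.
From mathcomp Require Import all_boot all_order all_algebra.
From mathcomp Require Import mpoly.
Set Implicit Arguments. Unset Strict Implicit. Unset Printing Implicit Defensive.
Import GRing.Theory.
Local Open Scope ring_scope.

(* Finite free R-modules R^c are column
   vectors 'cV_c; homomorphisms R^b -> R^a are matrices 'M_(a, b) acting on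
   the left. *)

Section Defs.
Variables (k : fieldType) (n : nat).
Local Notation R := {mpoly k[n]}.

Definition homog_of (d : nat) (p : R) : bool :=
  all (fun m : 'X_{1..n} => mdeg m == d) (msupp p).

Definition hcomp (d : nat) (p : R) : R :=
  \sum_(m <- msupp p | mdeg m == d) p@_m *: 'X_[m].

Definition is_ideal (I : R -> Prop) : Prop :=
  [/\ I 0, (forall x y, I x -> I y -> I (x + y)) & (forall r x, I x -> I (r * x))].

Definition homogeneous_ideal (I : R -> Prop) : Prop :=
  is_ideal I /\ forall p d, I p -> I (hcomp d p).

Definition mx_complex (c : nat -> nat) (D : forall j, 'M[R]_(c j, c j.+1)) :=
  forall j, D j *m D j.+1 = 0.

(* exact at C_{j+1} for every j >= 0 *)
Definition mx_exact_pos (c : nat -> nat) (D : forall j, 'M[R]_(c j, c j.+1)) :=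
  forall j (v : 'cV[R]_(c j.+1)), D j *m v = 0 ->
    exists w : 'cV[R]_(c j.+2), v = D j.+1 *m w.

Definition free_resolution (c : nat -> nat) (D : forall j, 'M[R]_(c j, c j.+1))
  (J : R -> Prop) : Prop :=
  [/\ c 0 = 1%N, mx_complex D, mx_exact_pos D &
      forall r, J r <-> exists (w : 'cV[R]_(c 1)) (i : 'I_(c 0)), (D 0 *m w) i 0 = r].

(* Homogeneity of a complex of graded free modules: sh j i is the degree of
   the i-th basis element of C_j, and every differential is homogeneous of
   degree 0, i.e. each entry of D j is zero or homogeneous of degree
   sh (j+1) col - sh j row. *)
Definition homogeneous_complex (c : nat -> nat) (D : forall j, 'M[R]_(c j, c j.+1))
  (sh : forall j, 'I_(c j) -> int) : Prop :=
  forall j (a : 'I_(c j)) (b : 'I_(c j.+1)),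
    D j a b = 0 \/
    exists d : nat, (sh j.+1 b - sh j a)%R = d%:Z /\ homog_of d (D j a b).

Definition homog_free_resolution (c : nat -> nat) (D : forall j, 'M[R]_(c j, c j.+1))
  (J : R -> Prop) : Prop :=
  free_resolution D J /\
  exists sh : forall j, 'I_(c j) -> int,
    (forall i : 'I_(c 0), sh 0 i = 0) /\ homogeneous_complex D sh.

Definition mx_chain_map (a b : nat -> nat)
  (dA : forall j, 'M[R]_(a j, a j.+1)) (dB : forall j, 'M[R]_(b j, b j.+1))
  (phi : forall j, 'M[R]_(b j, a j)) : Prop :=
  forall j, dB j *m phi j.+1 = phi j *m dA j.

(* Mapping cone of phi : A -> B:  Cone_0 = B_0, Cone_{j+1} = A_j (+) B_{j+1},
   with differential (x, y) |-> (- dA x, phi x + dB y). *)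
Definition cone_rank (a b : nat -> nat) (j : nat) : nat :=
  match j with 0 => b 0 | j'.+1 => (a j' + b j'.+1)%N end.

Definition cone_diff (a b : nat -> nat)
  (dA : forall j, 'M[R]_(a j, a j.+1)) (dB : forall j, 'M[R]_(b j, b j.+1))
  (phi : forall j, 'M[R]_(b j, a j)) (j : nat) :
  'M[R]_(cone_rank a b j, cone_rank a b j.+1) :=
  match j with
  | 0 => row_mx (phi 0) (dB 0)
  | j'.+1 => block_mx (- dA j') 0 (phi j'.+1) (dB j'.+1)
  end.

(* ranks of a resolution whose 0-th module is R and whose first module is
   F_1' (+) R^t, F_1' of rank p *)
Definition res_rank (p t : nat) (f : nat -> nat) (j : nat) : nat :=
  match j with 0 => 1%N | 1 => (p + t)%N | _ => f j end.

Definition res_rank0 (g : nat -> nat) (j : nat) : nat :=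
  match j with 0 => 1%N | _ => g j end.


End Defs.

Section Trimming.
Variables (k : fieldType) (n : nat).
Local Notation R := {mpoly k[n]}.
Variables (p t : nat) (f : nat -> nat).
(* F_0 = R, F_1 = F_1' (+) R e_0^1 (+) ... (+) R e_0^t (F_1' = first p
   coordinates, e_0^i = basis vector p + i), F_j of rank f j for j >= 2;
   d j : F_{j+1} -> F_j. *)
Variable d : forall j, 'M[R]_(res_rank p t f j, res_rank p t f j.+1).
Variables (g : 'I_t -> nat -> nat).
(* m i j : G^i_{j+1} -> G^i_j, G^i_0 = R *)
Variable m : forall i j, 'M[R]_(res_rank0 (g i) j, res_rank0 (g i) j.+1).
(* q i j = q^i_{j+1} : F_{j+2} -> G^i_{j+1} *)
Variable q : forall i j, 'M[R]_(g i j.+1, f j.+2).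
Variable a : 'I_t -> R -> Prop.

Definition d1 : 'M[R]_(1, p + t) := d 0.
Definition d2 : 'M[R]_(p + t, f 2) := d 1.

Definition d1' : 'M[R]_(1, p) := lsubmx d1.
Definition d1e (i : 'I_t) : R := rsubmx d1 0 i.
Definition d2' : 'M[R]_(p, f 2) := usubmx d2.
(* the t x f2 matrix whose i-th row is (d_0^i)' : F_2 -> R *)
Definition d20 : 'M[R]_(t, f 2) := dsubmx d2.

Definition T_rank (j : nat) : nat :=
  match j with 0 => p | j'.+1 => f j'.+2 end.
Definition T_diff (j : nat) : 'M[R]_(T_rank j, T_rank j.+1) :=
  match j return 'M[R]_(T_rank j, T_rank j.+1) with
  | 0 => d2'
  | j'.+1 => d j'.+2
  end.

Definition B_rank (j : nat) : nat :=
  match j with 0 => 1%N | j'.+1 => (\sum_(i < t) g i j'.+1)%N end.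
Definition beta : 'M[R]_(1, \sum_(i < t) g i 1) :=
  \mxrow_(i < t) ((- d1e i) *: (m i 0 : 'M[R]_(1, g i 1))).
Definition Gdiag (j : nat) :
  'M[R]_(\sum_(i < t) g i j.+1, \sum_(i < t) g i j.+2) :=
  \mxblock_(i < t, i' < t)
     (if i == i' then conform_mx 0 (m i j.+1 : 'M[R]_(g i j.+1, g i j.+2))
      else 0).
Definition B_diff (j : nat) : 'M[R]_(B_rank j, B_rank j.+1) :=
  match j return 'M[R]_(B_rank j, B_rank j.+1) with
  | 0 => beta
  | j'.+1 => Gdiag j'
  end.

Definition trim_map (j : nat) : 'M[R]_(B_rank j, T_rank j) :=
  match j return 'M[R]_(B_rank j, T_rank j) with
  | 0 => d1'
  | j'.+1 => \mxcol_(i < t) q i j'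
  end.

Definition trim_ideal : R -> Prop :=
  fun r => exists (u : 'cV[R]_p) (c : 'I_t -> R),
    (forall i, a i (c i)) /\ r = (d1' *m u) 0 0 + \sum_(i < t) c i * d1e i.

End Trimming.

From mathcomp Require Import all_boot all_algebra.
From mathcomp Require Import mpoly.
Set Implicit Arguments. Unset Strict Implicit. Unset Printing Implicit Defensive.
Import GRing.Theory.
Local Open Scope ring_scope.

(* The iterated trimming complex is the mapping cone of a chain map
   T -> B, and the proof is the usual mapping-cone argument.
   - For a chain map phi : A -> B, cone(phi) is a complex; it is exact at
     position j+2 as soon as B is exact at B_{j+2} and A is "relatively
     exact" at A_{j+1}: a cycle x whose image phi x is a boundary of B is
     a boundary of A.
   - For the trimming data, d_1 d_2 = 0 splits as
     d_1' d_2' = - sum_i d_1(e_0^i) (d_0^i)', which together with the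
     defining relations of the q^i shows that trim_map is a chain map.
   - B is a complex which, being a direct sum of the resolutions G^i in
     positions >= 1, is exact at every B_{j+2}.  T is relatively exact:
     at T_1 = F_2 the q^i force d_0^i x = 0, hence d_2 x = 0, and
     exactness of F applies; elsewhere this is exactness of F itself.
   - The bottom of the cone is handled directly: exactness at cone_1 uses
     exactness of F at F_1 and of the G^i at G^i_1, and the image of the
     first differential is J since a_i is the image of m^i_1. *)

Lemma mxcol_eq0 (R : nmodType) (t c : nat) (p_ : 'I_t -> nat)
  (A : forall i, 'M[R]_(p_ i, c)) :
  \mxcol_i A i = 0 -> forall i, A i = 0.
Proof. by move=> A0 i; rewrite -(mxcolK A i) A0 submxcol0. Qed.

Section MappingCone.
Variables (k : fieldType) (n : nat) (a b : nat -> nat).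
Local Notation R := {mpoly k[n]}.
Variables (dA : forall j, 'M[R]_(a j, a j.+1)) (dB : forall j, 'M[R]_(b j, b j.+1)).
Variable phi : forall j, 'M[R]_(b j, a j).
Hypothesis phi_chain : mx_chain_map dA dB phi.

Lemma cone_complex : mx_complex dA -> mx_complex dB ->
  mx_complex (cone_diff dA dB phi).
Proof.
move=> dAA dBB [|j] /=.
  by rewrite mul_row_block mulmxN phi_chain addNr mulmx0 add0r dBB row_mx0.
rewrite mulmx_block mulmxN mulNmx opprK dAA mul0mx addr0 mulmx0 mul0mx addr0.
by rewrite mulmxN phi_chain addNr mulmx0 add0r dBB block_mx0.
Qed.

Lemma cone_exact_succ (j : nat) :
  (forall z : 'cV_(b j.+2), dB j.+1 *m z = 0 -> exists u, z = dB j.+2 *m u) ->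
  (forall (x : 'cV_(a j.+1)) (y : 'cV_(b j.+2)), dA j *m x = 0 ->
     phi j.+1 *m x + dB j.+1 *m y = 0 -> exists w, x = dA j.+1 *m w) ->
  forall v : 'cV_(cone_rank a b j.+2),
  cone_diff dA dB phi j.+1 *m v = 0 ->
  exists w, v = cone_diff dA dB phi j.+2 *m w.
Proof.
move=> B_exact A_rel_exact v; rewrite /= -[v]vsubmxK mul_block_col.
set x := usubmx v; set y := dsubmx v.
move/eqP; rewrite col_mx_eq0 mul0mx addr0 mulNmx oppr_eq0 => /andP[/eqP x_cycle /eqP xy0].
have [w x_bd] := A_rel_exact x y x_cycle xy0.
have z_cycle : dB j.+1 *m (y + phi j.+2 *m w) = 0.
  by rewrite mulmxDr mulmxA phi_chain -mulmxA -x_bd addrC.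
have [u z_bd] := B_exact _ z_cycle.
exists (col_mx (- w) u).
rewrite /= mul_block_col mulmxN mulNmx opprK -x_bd mul0mx addr0 mulmxN -z_bd.
by rewrite addrC addrK.
Qed.

End MappingCone.

Section IteratedTrimming.
Variables (k : fieldType) (n p t : nat) (f : nat -> nat).
Local Notation R := {mpoly k[n]}.
Variable d : forall j, 'M[R]_(res_rank p t f j, res_rank p t f j.+1).
Variables (g : 'I_t -> nat -> nat) (a : 'I_t -> R -> Prop).
Variable m : forall i j, 'M[R]_(res_rank0 (g i) j, res_rank0 (g i) j.+1).
Variable q : forall i j, 'M[R]_(g i j.+1, f j.+2).

Local Notation m1 i := (m i 0%N : 'M[R]_(1, g i 1%N)).
Local Notation mS i j := (m i j.+1 : 'M[R]_(g i j.+1, g i j.+2)).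

Hypothesis F_complex : mx_complex d.
Hypothesis F_exact : mx_exact_pos d.
Hypothesis G_res : forall i, free_resolution (m i) (a i).
Hypothesis q_lift1 : forall i, m1 i *m q i 0%N = row i (d20 d).
Hypothesis q_liftS : forall i j, mS i j *m q i j.+1 = q i j *m d j.+2.

Fact G_complex i : mx_complex (m i). Proof. by case: (G_res i). Qed.
Fact G_exact i : mx_exact_pos (m i). Proof. by case: (G_res i). Qed.

Fact G_image i r : a i r <-> exists w : 'cV_(g i 1%N), (m1 i *m w) 0 0 = r.
Proof.
have [_ _ _ ->] := G_res i; split; first by case=> w [i0 <-]; exists w; rewrite (ord1 i0).
by case=> w <-; exists w, 0.
Qed.

Lemma rsubmx_d1_mul c (M : 'M[R]_(t, c)) :
  rsubmx (d1 d) *m M = \sum_i d1e d i *: row i M.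
Proof.
apply/matrixP=> x y; rewrite !mxE summxE; apply: eq_bigr => i _.
by rewrite !mxE /d1e mxE (ord1 x).
Qed.

Lemma beta_mul c (y : 'M[R]_(\sum_i g i 1%N, c)) :
  beta d m *m y = \sum_i (- d1e d i) *: (m1 i *m submxcol y i).
Proof.
rewrite -{1}(submxcolK y) /beta mul_mxrow_mxcol.
by apply: eq_bigr => i _; rewrite scalemxAl.
Qed.

Lemma Gdiag_mul j c (y : 'M[R]_(\sum_i g i j.+2, c)) :
  Gdiag m j *m y = \mxcol_i (mS i j *m submxcol y i).
Proof.
rewrite -{1}(submxcolK y) /Gdiag mul_mxblock_mxrow; apply: eq_mxcol => i.
rewrite (bigD1 i) //= eqxx conform_mx_id big1 ?addr0 // => i' /negbTE.
by rewrite eq_sym => ->; rewrite mul0mx.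
Qed.

(* The F_1'-component of d_1 d_2 = 0. *)
Lemma d1'_d2' : d1' d *m d2' d = - \sum_i d1e d i *: row i (d20 d).
Proof.
apply/eqP; rewrite -addr_eq0 -rsubmx_d1_mul -mul_row_col hsubmxK vsubmxK.
exact/eqP/(F_complex 0%N).
Qed.

(* trim_map is a chain map T -> B: in degree 0 by d1'_d2' and the
   relations m^i_1 q^i_1 = (d_0^i)', above by m^i_{k} q^i_k = q^i_{k-1} d. *)
Lemma trim_chain_map : mx_chain_map (T_diff d) (B_diff d m) (trim_map d q).
Proof.
case=> [|j].
  change (beta d m *m \mxcol_i q i 0%N = d1' d *m d2' d).
  rewrite beta_mul d1'_d2' -sumrN; apply: eq_bigr => i _.
  by rewrite mxcolK q_lift1 scaleNr.
change (Gdiag m j *m \mxcol_i q i j.+1 = \mxcol_i q i j *m d j.+2).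
by rewrite Gdiag_mul mxcol_mul; apply: eq_mxcol => i; rewrite mxcolK q_liftS.
Qed.

(* T is a complex: d_2' d_3 is the F_1'-part of d_2 d_3 = 0. *)
Lemma T_complex : mx_complex (T_diff d).
Proof.
case=> [|j]; last exact: F_complex j.+2.
by change (d2' d *m d 2 = 0); rewrite /d2' mul_usub_mx (F_complex 1%N) linear0.
Qed.

Lemma m_Gdiag j i : (m i j : 'M_(res_rank0 (g i) j, g i j.+1)) *m submxcol (Gdiag m j) i = 0.
Proof. by rewrite -[Gdiag m j]mulmx1 Gdiag_mul mxcolK mulmxA (G_complex i j) mul0mx. Qed.

Lemma B_complex : mx_complex (B_diff d m).
Proof.
case=> [|j].
  change (beta d m *m Gdiag m 0 = 0).
  by rewrite beta_mul; apply: big1 => i _; rewrite (m_Gdiag 0%N i) scaler0.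
change (Gdiag m j *m Gdiag m j.+1 = 0).
rewrite Gdiag_mul -(mxcol0 (p_ := fun i => g i j.+1)).
by apply: eq_mxcol => i; apply: m_Gdiag j.+1 i.
Qed.

Lemma Gdiag_exact j (z : 'cV[R]_(\sum_i g i j.+2)) :
  Gdiag m j *m z = 0 -> exists u, z = Gdiag m j.+1 *m u.
Proof.
rewrite Gdiag_mul => /mxcol_eq0 z_cycle.
have /fin_all_exists [u z_bd] : forall i, exists u : 'cV_(g i j.+3),
    submxcol z i = mS i j.+1 *m u by move=> i; exact: G_exact i j.+1 _ (z_cycle i).
exists (\mxcol_i u i); rewrite Gdiag_mul -[LHS]submxcolK; apply: eq_mxcol => i.
by rewrite mxcolK z_bd.
Qed.

(* If q x is a boundary of B then (d_0^i)' x = m^i_1 q^i_1 x vanishes,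
   since m^i_1 m^i_2 = 0. *)
Lemma d20_cycle (x : 'cV[R]_(f 2)) (y : 'cV[R]_(\sum_i g i 2)) :
  \mxcol_i q i 0%N *m x + Gdiag m 0 *m y = 0 -> d20 d *m x = 0.
Proof.
rewrite mxcol_mul Gdiag_mul -mxcolD => /mxcol_eq0 xy0.
apply/row_matrixP => i; rewrite row0 row_mul -q_lift1 -mulmxA.
have /eqP := xy0 i; rewrite addr_eq0 => /eqP ->.
by rewrite mulmxN mulmxA (G_complex i 0%N) mul0mx oppr0.
Qed.

Lemma T_rel_exact j (x : 'cV[R]_(T_rank p f j.+1)) (y : 'cV[R]_(B_rank g j.+2)) :
  T_diff d j *m x = 0 -> trim_map d q j.+1 *m x + B_diff d m j.+1 *m y = 0 ->
  exists w, x = T_diff d j.+1 *m w.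
Proof.
case: j x y => [|j] x y x_cycle; last by move=> _; exact: F_exact j.+2 x x_cycle.
move/d20_cycle => x_d20.
have x_d2 : d 1%N *m x = 0.
  change (d2 d *m x = 0); rewrite -[d2 d]vsubmxK mul_col_mx.
  by change (col_mx (d2' d *m x) (d20 d *m x) = 0); rewrite x_cycle x_d20 col_mx0.
exact: F_exact 1%N x x_d2.
Qed.

Lemma cone_exact_one (v : 'cV[R]_(p + \sum_i g i 1%N)) :
  row_mx (d1' d) (beta d m) *m v = 0 ->
  exists w : 'cV_(f 2 + \sum_i g i 2),
    v = block_mx (- d2' d) 0 (\mxcol_i q i 0%N) (Gdiag m 0) *m w.
Proof.
rewrite -[v]vsubmxK mul_row_col beta_mul; set x := usubmx v; set y := dsubmx v.
move=> v_cycle.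
(* (x, u) is a cycle of d_1, where u_i = - m^i_1 y_i *)
pose u : 'cV_t := \col_i (- (m1 i *m submxcol y i) 0 0).
have xu_cycle : d 0%N *m col_mx x u = 0.
  change (d1 d *m col_mx x u = 0); rewrite -[d1 d]hsubmxK mul_row_col -v_cycle.
  congr (_ + _); apply/matrixP => r s; rewrite !mxE summxE; apply: eq_bigr => i _.
  by rewrite !mxE (ord1 r) (ord1 s) /d1e mxE mulrN mulNr.
have [w xu_bd] := F_exact xu_cycle.
have [x_bd u_bd] : x = d2' d *m w /\ u = d20 d *m w.
  by apply: eq_col_mx; rewrite -mul_col_mx /d2' /d20 vsubmxK.
have yw_cycle i : m1 i *m (submxcol y i + q i 0%N *m w) = 0.
  rewrite mulmxDr mulmxA q_lift1 -row_mul -u_bd.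
  by apply/matrixP => r s; rewrite (ord1 r) (ord1 s) !mxE subrr.
have /fin_all_exists [z yw_bd] : forall i, exists z : 'cV_(g i 2),
    submxcol y i + q i 0%N *m w = mS i 0%N *m z.
  by move=> i; exact: G_exact i 0%N _ (yw_cycle i).
exists (col_mx (- w) (\mxcol_i z i)).
rewrite mul_block_col mulmxN mulNmx opprK -x_bd mul0mx addr0 mulmxN Gdiag_mul.
congr col_mx; rewrite mxcol_mul -mxcolN -mxcolD -[LHS]submxcolK.
by apply: eq_mxcol => i; rewrite mxcolK -yw_bd addrC addrK.
Qed.

Lemma cone_image r :
  trim_ideal d a r <->
  exists (w : 'cV[R]_(p + \sum_i g i 1%N)) (i0 : 'I_1),
    (row_mx (d1' d) (beta d m) *m w) i0 0 = r.
Proof.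
split.
  case=> u [c [c_a ->]].
  have /fin_all_exists [w w_c] : forall i, exists w : 'cV_(g i 1%N),
      (m1 i *m w) 0 0 = c i by move=> i; apply/G_image; apply: c_a.
  exists (col_mx u (\mxcol_i (- w i))), 0.
  rewrite mul_row_col beta_mul mxE summxE; congr (_ + _).
  apply: eq_bigr => i _.
  by rewrite mxcolK mulmxN scalerN scaleNr opprK mxE w_c mulrC.
case=> w [i0 <-]; rewrite (ord1 i0) -[w]vsubmxK mul_row_col beta_mul mxE summxE.
exists (usubmx w), (fun i => (m1 i *m - submxcol (dsubmx w) i) 0 0); split.
  by move=> i; apply/G_image; exists (- submxcol (dsubmx w) i).
congr (_ + _); apply: eq_bigr => i _.
by rewrite mulmxN scaleNr -scalerN mxE mulrC.
Qed.

End IteratedTrimming.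

Theorem theorem3p4 (k : fieldType) (n : nat)
  (I : {mpoly k[n]} -> Prop) (p t : nat) (f : nat -> nat)
  (d : forall j, 'M[{mpoly k[n]}]_(res_rank p t f j, res_rank p t f j.+1))
  (HI : homogeneous_ideal I)
  (Hres : homog_free_resolution d I)
  (a : 'I_t -> {mpoly k[n]} -> Prop)
  (Ha : forall i, homogeneous_ideal (a i))
  (Hd0 : forall (i : 'I_t) (v : 'cV[{mpoly k[n]}]_(f 2%N)), a i ((d20 d *m v) i 0))
  (g : 'I_t -> nat -> nat)
  (m : forall i j, 'M[{mpoly k[n]}]_(res_rank0 (g i) j, res_rank0 (g i) j.+1))
  (Hm : forall i, homog_free_resolution (m i) (a i))
  (q : forall i j, 'M[{mpoly k[n]}]_(g i j.+1, f j.+2))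
  (Hq1 : forall i, (m i 0%N : 'M_(1, g i 1%N)) *m q i 0%N = row i (d20 d))
  (Hqk : forall i j, (m i j.+1 : 'M_(g i j.+1, g i j.+2)) *m q i j.+1
                     = q i j *m (d j.+2 : 'M_(f j.+2, f j.+3))) :
  mx_chain_map (T_diff d) (B_diff d m) (trim_map d q) /\
  free_resolution (cone_diff (T_diff d) (B_diff d m) (trim_map d q))
                  (trim_ideal d a).
Proof.
have [[_ F_complex F_exact _] _] := Hres.
have G_res i := (Hm i).1.
have chain := trim_chain_map F_complex Hq1 Hqk.
split=> //; split=> //.
- exact: cone_complex chain (T_complex F_complex) (B_complex d G_res).
- case=> [|j] v; first exact: (cone_exact_one F_exact G_res Hq1 (v := v)).
  exact: (cone_exact_succ chain (Gdiag_exact G_res (j := j))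
                          (T_rel_exact F_exact G_res Hq1 (j := j)) (v := v)).
- exact (cone_image d G_res).
Qed.
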